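(* For $r\ge1$, let $\mathbf{v}_r\in\mathrm{GF}(q^m)^r$ have rank $r\le m$, and let $\mathcal{L}_r=\langle\mathbf{v}_r\rangle^\perp$. Then the number $A_{r,r}$ of vectors in $\mathcal{L}_r$ of rank $r$ depends only on $r$ (not on the choice of $\mathbf{v}_r$) and satisfies $A_{r,r}=\alpha(m,r-1)-q^{r-1}A_{r-1,r-1}$, where $A_{0,0}=1$. Furthermore, the rank weight enumerator of $\mathcal{L}_r$ is $$W^{\mathrm{R}}_{\mathcal{L}_r}(x,y)=q^{-m}\Big\{\big[x+(q^m-1)y\big]^{[r]}+(q^m-1)(x-y)^{[r]}\Big\}.$$
   Context: $q$ is a prime power. For $\mathbf{x}\in\mathrm{GF}(q^m)^r$, $\mathrm{rk}(\mathbf{x})$ is the dimension over $\mathrm{GF}(q)$ of the $\mathrm{GF}(q)$-span of its coordinates in $\mathrm{GF}(q^m)$. $\langle\mathbf{v}\rangle=\{a\mathbf{v}:a\in\mathrm{GF}(q^m)\}$, $S^\perp=\{\mathbf{u}:\sum_iu_is_i=0\ \forall\mathbf{s}\in S\}$. $\alpha(m,0)=1$, $\alpha(m,u)=\prod_{i=0}^{u-1}(q^m-q^i)$. The rank weight enumerator of $\mathcal{C}\subseteq\mathrm{GF}(q^m)^r$ is $\sum_{\mathbf{c}\in\mathcal{C}}y^{\mathrm{rk}(\mathbf{c})}x^{r-\mathrm{rk}(\mathbf{c})}$. $q$-product: for homogeneous polynomials $a(x,y;m)=\sum_{i=0}^{d}a_i(m)y^ix^{d-i}$ and $b(x,y;m)=\sum_{j=0}^{e}b_j(m)y^jx^{e-j}$,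 with coefficients real functions of $m$ (zero outside the given ranges), $a*b=\sum_{u=0}^{d+e}c_u(m)y^ux^{d+e-u}$ with $c_u(m)=\sum_{i=0}^uq^{ie}a_i(m)b_{u-i}(m-i)$. $q$-powers: $a^{[0]}=1$, $a^{[l]}=a^{[l-1]}*a$. Here $x+(q^m-1)y$ has coefficients $1,q^m-1$ and $x-y$ has coefficients $1,-1$. *)

From HB Require Import structures.
From mathcomp Require Import all_boot all_order all_algebra all_field.
Set Implicit Arguments. Unset Strict Implicit. Unset Printing Implicit Defensive.
Import Order.TTheory GRing.Theory Num.Theory.
Local Open Scope ring_scope.

(* Convention: GF(q) is a finite field F (q = #|F|), GF(q^m) is a finite
   field extension L of F with \dim {:L} = m. *)

Section RankMetric.
Variables (F : finFieldType) (L : fieldExtType F).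
Local Notation LT := (finvect_type L).

Definition rk (r : nat) (x : 'rV[LT]_r) : nat :=
  \dim <<[seq x ord0 i | i <- enum 'I_r]>>%VS.

Definition lspan (r : nat) (v : 'rV[LT]_r) : {set 'rV[LT]_r} :=
  [set a *: v | a : LT].

Definition perp (r : nat) (S : {set 'rV[LT]_r}) : {set 'rV[LT]_r} :=
  [set u : 'rV[LT]_r | [forall s in S, \sum_(i < r) u 0 i * s 0 i == 0]].

(* number of codewords of rank u in C: the coefficient of y^u x^(r-u) in the
   rank weight enumerator of C *)
Definition rwe_coef (r : nat) (C : {set 'rV[LT]_r}) (u : nat) : nat :=
  #|[set c in C | rk c == u]|.

End RankMetric.

Definition alpha (q m u : nat) : int :=
  \prod_(i < u) ((q ^ m)%:Z - (q ^ i)%:Z).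

(* Homogeneous polynomials sum_{i=0}^d a_i(m) y^i x^(d-i) whose coefficients
   are rational-valued functions of m (m ranging over int, since the q-product
   evaluates coefficients at shifted arguments m - i). *)
Record hpoly := HPoly { hdeg : nat; hcoef : nat -> int -> rat }.

Definition hc (a : hpoly) (i : nat) (m : int) : rat :=
  if (i <= hdeg a)%N then hcoef a i m else 0.

Definition qprod (q : nat) (a b : hpoly) : hpoly :=
  HPoly (hdeg a + hdeg b)
    (fun u m => \sum_(i < u.+1)
        (q%:Q) ^+ (i * hdeg b) * hc a i m * hc b (u - i) (m - i%:Z)).

Definition hone : hpoly := HPoly 0 (fun _ _ => 1).

Fixpoint qpow (q : nat) (a : hpoly) (l : nat) : hpoly :=
  match l with
  | 0 => hone
  | l'.+1 => qprod q (qpow q a l') a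
  end.

(* x + (q^m - 1) y  and  x - y *)
Definition hX_plus (q : nat) : hpoly :=
  HPoly 1 (fun i m => if i == 0%N then 1 else (q%:Q) ^ m - 1).
Definition hX_minus : hpoly :=
  HPoly 1 (fun i _ => if i == 0%N then 1 else -1).

From HB Require Import structures.
From mathcomp Require Import all_boot all_order all_algebra all_field.
From mathcomp Require Import ring zify.
Import Order.TTheory GRing.Theory Num.Theory.
Local Open Scope ring_scope.
Set Implicit Arguments. Unset Strict Implicit. Unset Printing Implicit Defensive.

(* Peel off the first coordinate: v = (y, v') with y <> 0 because rk v = r.
   A vector (x, w) is orthogonal to v exactly when x is the completion
   -<w, v'>/y of w, and then rk (x, w) is rk w or rk w + 1 according as this x
   lies in the F-span of the entries of w.  So the rank distribution of
   <v>^perp is determined by the number N(r, s) of all length-r vectors of rank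
   s and by the number E_t of rank-t vectors w whose completion lies in their
   span.  To count the latter, shift v' to v' + a y for a in F^r: all these
   vectors have rank r, and w is orthogonal to v' + a y iff sum_i a_i w_i is
   the completion of w, an equation with q^(r - rk w) solutions a whenever it
   has one.  Summing the induction hypothesis (the rank-t count W(r, t) for
   every rank-r vector) over the q^r shifts gives E_t = q^t W(r, t).  The
   resulting recursions for N and W are the ones satisfied by the coefficients
   of [x + (q^m - 1) y]^[r] and (x - y)^[r], and the top coefficient gives the
   recursion for A_{r,r}. *)

Section RowCons.
Variables (T : Type) (r : nat).

Definition row_cons (x : T) (w : 'rV[T]_r) : 'rV[T]_r.+1 :=
  \row_i (if unlift ord0 i is Some j then w ord0 j else x).

Definition row_tail (u : 'rV[T]_r.+1) : 'rV[T]_r := \row_j u ord0 (lift ord0 j).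

Lemma row_cons0 x (w : 'rV[T]_r) : row_cons x w ord0 ord0 = x.
Proof. by rewrite mxE unlift_none. Qed.

Lemma row_consS x (w : 'rV[T]_r) j : row_cons x w ord0 (lift ord0 j) = w ord0 j.
Proof. by rewrite mxE liftK. Qed.

Lemma row_tail_cons x (w : 'rV[T]_r) : row_tail (row_cons x w) = w.
Proof. by apply/rowP => j; rewrite mxE row_consS. Qed.

Lemma row_cons_eta (u : 'rV[T]_r.+1) : row_cons (u ord0 ord0) (row_tail u) = u.
Proof.
apply/rowP => i; rewrite !mxE; case: unliftP => [j ->|->]; last by rewrite ord1.
by rewrite mxE ord1.
Qed.

End RowCons.

Lemma big_row_cons (R : Type) (idx : R) (op : Monoid.com_law idx)
    (T : finType) (r : nat) (P : 'rV[T]_r.+1 -> R) :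
  \big[op/idx]_(u : 'rV[T]_r.+1) P u =
  \big[op/idx]_(w : 'rV[T]_r) \big[op/idx]_(x : T) P (row_cons x w).
Proof.
rewrite (reindex (fun p : T * 'rV[T]_r => row_cons p.1 p.2)) /=; last first.
  exists (fun u : 'rV[T]_r.+1 => (u ord0 ord0, row_tail u)) => [[x w] _|u _] /=.
    by rewrite row_cons0 row_tail_cons.
  by rewrite row_cons_eta.
by rewrite -(pair_big xpredT xpredT (fun x w => P (row_cons x w))) exchange_big.
Qed.

Lemma sum_addn_notin (T : finType) (A : {pred T}) (a s : nat) :
  (\sum_(x : T) (a + (x \notin A) == s) = (a == s) * #|A| + (a.+1 == s) * #|[predC A]|)%N.
Proof.
rewrite (bigID (mem A)) /=.
under eq_bigr => x xA do rewrite xA addn0.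
under [X in (_ + X)%N]eq_bigr => x xA do rewrite xA addn1.
by rewrite !sum_nat_cond_const !cardsE !(mulnC (_ == _)).
Qed.

Section RowSpan.
Variables (K : fieldType) (vT : vectType K).

Definition row_span (r : nat) (w : 'rV[vT]_r) : {vspace vT} :=
  <<[seq w ord0 i | i <- enum 'I_r]>>%VS.

Lemma dim_row_span_le r (w : 'rV[vT]_r) : (\dim (row_span w) <= r)%N.
Proof. by rewrite (leq_trans (dim_span _)) // size_map size_enum_ord. Qed.

Lemma row_span0 (w : 'rV[vT]_0) : row_span w = 0%VS.
Proof. by rewrite /row_span (size0nil (size_enum_ord 0)) span_nil. Qed.

Lemma mem_row_span r (w : 'rV[vT]_r) i : w ord0 i \in row_span w.
Proof. by apply: memv_span; apply: map_f; rewrite mem_enum. Qed.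

Lemma row_span_subP r (w : 'rV[vT]_r) (U : {vspace vT}) :
  reflect (forall i, w ord0 i \in U) (row_span w <= U)%VS.
Proof.
apply: (iffP idP) => [wU i|wU]; first exact: subvP wU _ (mem_row_span w i).
by apply/span_subvP => y /mapP [i _ ->].
Qed.

Lemma row_span_cons r x (w : 'rV[vT]_r) :
  row_span (row_cons x w) = (<[x]> + row_span w)%VS.
Proof.
rewrite /row_span enum_ordSl /= span_cons row_cons0 -map_comp.
by congr (_ + <<_>>)%VS; apply: eq_map => j /=; rewrite row_consS.
Qed.

Lemma dim_add_line x (U : {vspace vT}) :
  \dim (<[x]> + U) = (\dim U + (x \notin U))%N.
Proof.
have [xU|xU] /= := boolP (x \in U).
  by rewrite addn0; congr (\dim _); apply/addv_idPr; rewrite -memvE.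
apply/eqP; rewrite addn1 eqn_leq; apply/andP; split.
  by rewrite (leq_trans (dimv_add_leqif _ _)) // dim_vline addnC -addn1 leq_add2l leq_b1.
rewrite (ltn_leqif (dimv_leqif_eq (addvSr _ _))); apply: contra xU => /eqP ->.
by rewrite memvE addvSl.
Qed.

End RowSpan.

Section LinearCombination.
Variables (K : finFieldType) (vT : vectType K).
Local Notation q := #|K|.

Definition lincomb (r : nat) (a : 'rV[K]_r) (w : 'rV[vT]_r) : vT :=
  \sum_i a ord0 i *: w ord0 i.

Lemma lincomb_cons r k (a : 'rV[K]_r) x (w : 'rV[vT]_r) :
  lincomb (row_cons k a) (row_cons x w) = k *: x + lincomb a w.
Proof.
rewrite /lincomb big_ord_recl !row_cons0; congr (_ + _).
by apply: eq_bigr => i _; rewrite !row_consS.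
Qed.

Lemma sum_line_offsets (x c : vT) (U : {vspace vT}) : x \notin U ->
  (\sum_(k : K) ((c - k *: x)%R \in U) = (c \in <[x]> + U)%VS)%N.
Proof.
move=> xU; have [cxU|cxU] := boolP (c \in (<[x]> + U)%VS); last first.
  apply/eqP; rewrite sum_nat_eq0; apply/forallP => k; apply/implyP => _.
  rewrite eqb0; apply: contra cxU => ckU.
  by rewrite -[c](subrK (k *: x)) addrC memv_add ?memvZ ?memv_line.
case/memv_addP: cxU => _ /vlineP [k0 ->] [u uU ->].
rewrite (bigD1 k0) //= addrAC subrr add0r uU big1 // => k kk0.
apply/eqP; rewrite eqb0; apply: contra xU => ckU.
have k0k : k0 - k != 0 by rewrite subr_eq0 eq_sym.
rewrite -[x]scale1r -(mulVf k0k) -scalerA memvZ //.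
by rewrite scalerBl -(addrK u (k0 *: x)) addrAC memvB.
Qed.

Lemma sum_lincomb_fiber r (w : 'rV[vT]_r) (c : vT) :
  (\sum_(a : 'rV[K]_r) (lincomb a w == c)
    = (c \in row_span w) * q ^ (r - \dim (row_span w)))%N.
Proof.
elim: r w c => [|r IH] w c.
  rewrite row_span0 dimv0 memv0 expn0 muln1 eq_sym.
  under eq_bigr do rewrite /lincomb big_ord0.
  by rewrite sum_nat_const card_mx muln0 expn0 mul1n.
rewrite -(row_cons_eta w); set x := w ord0 ord0; set w' := row_tail w.
rewrite big_row_cons exchange_big /=.
under eq_bigr => k _ do under eq_bigr => a _ do
  rewrite lincomb_cons addrC (can2_eq (addrK _) (subrK _)).
under eq_bigr => k _ do rewrite IH.
rewrite row_span_cons dim_add_line.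
have [xw'|xw'] /= := boolP (x \in row_span w').
  under eq_bigr => k _ do rewrite rpredBr ?rpredZ //.
  rewrite sum_nat_const cardT -cardE addn0 (addv_idPr _) -?memvE //.
  by rewrite subSn ?dim_row_span_le // expnS mulnCA.
by rewrite -big_distrl /= sum_line_offsets // addn1 subSS.
Qed.

End LinearCombination.

Lemma hc_gt_hdeg (a : hpoly) u mm : (hdeg a < u)%N -> hc a u mm = 0.
Proof. by rewrite /hc => /ltn_geF ->. Qed.

Section QPowers.
Variable q : nat.
Hypothesis q_gt0 : (0 < q)%N.

Local Notation plus_pow r := (qpow q (hX_plus q) r).
Local Notation minus_pow r := (qpow q hX_minus r).

Lemma hdeg_qpow (a : hpoly) r : hdeg a = 1%N -> hdeg (qpow q a r) = r.
Proof. by move=> a1; elim: r => //= r ->; rewrite a1 addn1. Qed.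

Lemma hc_qprod_deg1 (b a : hpoly) u mm : hdeg a = 1%N ->
  hc (qprod q b a) u mm = q%:Q ^+ u * hc b u mm * hc a 0 (mm - u%:Z) +
    (if u is u'.+1 then q%:Q ^+ u' * hc b u' mm * hc a 1 (mm - u'%:Z) else 0).
Proof.
move=> a1; rewrite {1}/hc /qprod /= a1.
case: leqP => hu; last first.
  rewrite (@hc_gt_hdeg b u) ?mulr0 ?mul0r ?add0r; last by rewrite (leq_trans _ hu) ?addn1.
  by case: u hu => // u hu; rewrite (@hc_gt_hdeg b u) ?mulr0 ?mul0r // -ltnS -addn1.
rewrite big_ord_recr /= subnn muln1 addrC; congr (_ + _).
case: u hu => [|u] hu; first by rewrite big_ord0.
rewrite big_ord_recr /= muln1 subSn // subnn big1 ?add0r // => i _.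
by rewrite (@hc_gt_hdeg a) ?mulr0 // a1; have := ltn_ord i; lia.
Qed.

Lemma hc_plus_pow_succ r u mm :
  hc (plus_pow r.+1) u mm = q%:Q ^+ u * hc (plus_pow r) u mm +
    (if u is u'.+1 then (q%:Q ^ mm - q%:Q ^+ u') * hc (plus_pow r) u' mm else 0).
Proof.
rewrite /= hc_qprod_deg1 //= /hc /= mulr1; congr (_ + _).
case: u => // u.
have qQ0 : q%:Q != 0 by rewrite pnatr_eq0 -lt0n.
have split_exp : q%:Q ^+ u * q%:Q ^ (mm - u%:Z) = q%:Q ^ mm.
  by rewrite -[q%:Q ^+ u]/(q%:Q ^ u%:Z) -expfzDr // addrC subrK.
by rewrite -split_exp; ring.
Qed.

Lemma hc_minus_pow_succ r u mm :
  hc (minus_pow r.+1) u mm = q%:Q ^+ u * hc (minus_pow r) u mm -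
    (if u is u'.+1 then q%:Q ^+ u' * hc (minus_pow r) u' mm else 0).
Proof.
rewrite /= hc_qprod_deg1 //= /hc /= mulr1; congr (_ + _).
by case: u => [|u]; rewrite ?oppr0 ?mulrN1.
Qed.

Lemma hc_plus_pow_diag m r : hc (plus_pow r) r m%:Z = (alpha q m r)%:~R.
Proof.
elim: r => [|r IH]; first by rewrite /alpha big_ord0.
rewrite hc_plus_pow_succ hc_gt_hdeg ?hdeg_qpow // mulr0 add0r IH.
by rewrite /alpha big_ord_recr /= rmorphM rmorphB /= mulrC -!pmulrn !natrX.
Qed.

Definition rwe_formula m r u : rat :=
  q%:Q ^ (- (m%:Z)) *
    (hc (plus_pow r) u m%:Z + (q%:Q ^ (m%:Z) - 1) * hc (minus_pow r) u m%:Z).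

Lemma rwe_formula0 m u : rwe_formula m 0 u = (u == 0%N)%:R.
Proof.
have qm0 : q%:Q ^ m%:Z != 0 by rewrite expfz_neq0 // pnatr_eq0 -lt0n.
rewrite /rwe_formula /hc /=; case: u => [|u] /=; last by ring.
by rewrite -invr_expz mulr1 addrC subrK mulVf.
Qed.

Lemma rwe_formula_gt m r u : (r < u)%N -> rwe_formula m r u = 0.
Proof.
by move=> ru; rewrite /rwe_formula !hc_gt_hdeg ?hdeg_qpow // mulr0 addr0 mulr0.
Qed.

Lemma rwe_formula_succ m r u :
  rwe_formula m r.+1 u = q%:Q ^+ u * rwe_formula m r u +
    (if u is u'.+1 then hc (plus_pow r) u' m%:Z - q%:Q ^+ u' * rwe_formula m r u'
     else 0).
Proof.
have qm0 : q%:Q ^ m%:Z != 0 by rewrite expfz_neq0 // pnatr_eq0 -lt0n.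
rewrite /rwe_formula hc_plus_pow_succ hc_minus_pow_succ -invr_expz.
by case: u => [|u]; field.
Qed.

End QPowers.

Fixpoint full_rank_perp_count (q m r : nat) : int :=
  if r is r'.+1 then alpha q m r' - (q ^ r')%:Z * full_rank_perp_count q m r' else 1.

Lemma rwe_formula_diag q m r : (0 < q)%N ->
  rwe_formula q m r r = (full_rank_perp_count q m r)%:~R.
Proof.
move=> q_gt0; elim: r => [|r IH]; first by rewrite rwe_formula0.
rewrite rwe_formula_succ // rwe_formula_gt // mulr0 add0r hc_plus_pow_diag // IH /=.
by rewrite rmorphB rmorphM /= -[((q ^ r)%N)%:~R]pmulrn natrX.
Qed.

Section RankMetric.
Variables (F : finFieldType) (L : fieldExtType F).
Local Notation LT := (finvect_type L).
Local Notation q := #|F|.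
Let q_gt0 : (0 < q)%N := ltnW (card_finNzRing_gt1 F).

Lemma rkE r (w : 'rV[LT]_r) : rk w = \dim (row_span w).
Proof. by []. Qed.

Lemma rk_le r (w : 'rV[LT]_r) : (rk w <= r)%N.
Proof. exact: dim_row_span_le. Qed.

Lemma rk_row_cons r x (w : 'rV[LT]_r) :
  rk (row_cons x w) = (rk w + (x \notin row_span w))%N.
Proof. by rewrite !rkE row_span_cons dim_add_line. Qed.

Lemma card_row_span r (w : 'rV[LT]_r) : #|row_span w| = (q ^ rk w)%N.
Proof. exact: card_vspace. Qed.

Definition num_rank r s : nat := (\sum_(w : 'rV[LT]_r) (rk w == s))%N.

Lemma rk_row0 (w : 'rV[LT]_0) : rk w = 0%N.
Proof. by apply/eqP; rewrite -leqn0 rk_le. Qed.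

Definition dot r (u v : 'rV[LT]_r) : LT := \sum_i u ord0 i * v ord0 i.

Definition num_perp_rank r (v : 'rV[LT]_r) s : nat :=
  (\sum_(u : 'rV[LT]_r) ((dot u v == 0%R) && (rk u == s)))%N.

Lemma rwe_coef_perp_lspan r (v : 'rV[LT]_r) s :
  rwe_coef (perp (lspan v)) s = num_perp_rank v s.
Proof.
rewrite /rwe_coef -sum1_card big_mkcond /=; apply: eq_bigr => u _.
rewrite !inE; congr (nat_of_bool (_ && _)).
apply/forallP/eqP => [perp_u | uv0 s'].
  by apply/eqP/(implyP (perp_u v)); apply/imsetP; exists 1; rewrite ?scale1r.
apply/implyP => /imsetP [a _ ->].
under eq_bigr do rewrite mxE mulrCA.
by rewrite -mulr_sumr -[X in a * X]/(dot u v) uv0 mulr0.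
Qed.

Lemma dot_row_cons r x y (u v : 'rV[LT]_r) :
  dot (row_cons x u) (row_cons y v) = x * y + dot u v.
Proof.
rewrite /dot big_ord_recl !row_cons0; congr (_ + _).
by apply: eq_bigr => i _; rewrite !row_consS.
Qed.

Definition shift_row r (v : 'rV[LT]_r) (y : LT) (a : 'rV[F]_r) : 'rV[LT]_r :=
  \row_i (v ord0 i + a ord0 i *: y).

Lemma dot_shift_row r (v : 'rV[LT]_r) y a w :
  dot w (shift_row v y a) = dot w v + lincomb a w * y.
Proof.
rewrite /dot /lincomb mulr_suml -big_split /=; apply: eq_bigr => i _.
by rewrite mxE mulrDr -scalerAl scalerAr.
Qed.

Lemma rk_shift_row r (v : 'rV[LT]_r) y a :
  rk (row_cons y v) = r.+1 -> rk (shift_row v y a) = r.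
Proof.
move=> rk_yv; apply/eqP; rewrite eqn_leq rk_le /= -ltnS -rk_yv !rkE row_span_cons.
have sub : (<[y]> + row_span v <= <[y]> + row_span (shift_row v y a))%VS.
  rewrite subv_add addvSl /=; apply/row_span_subP => i.
  have -> : v ord0 i = - (a ord0 i *: y) + shift_row v y a ord0 i.
    by rewrite mxE addrC addrK.
  by rewrite memv_add ?memvN ?memvZ ?memv_line ?mem_row_span.
by rewrite (leq_trans (dimvS sub)) // dim_add_line -addn1 leq_add2l leq_b1.
Qed.

Section Completion.
Variables (r : nat) (v : 'rV[LT]_r) (y : LT).
Hypothesis y_neq0 : y != 0.

Definition completion (w : 'rV[LT]_r) : LT := - dot w v / y.

Lemma eq0_completion x w : (x * y + dot w v == 0) = (x == completion w).
Proof. by rewrite addr_eq0 (can2_eq (mulfK y_neq0) (divfK y_neq0)). Qed.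

Definition num_completable t : nat :=
  (\sum_(w : 'rV[LT]_r) ((completion w \in row_span w) && (rk w == t)))%N.

Lemma num_perp_rank_row_cons s :
  (num_perp_rank (row_cons y v) s)%:R = (num_completable s)%:R +
    (if s is s'.+1 then (num_rank r s')%:R - (num_completable s')%:R else 0) :> rat.
Proof.
have -> : num_perp_rank (row_cons y v) s =
    (\sum_(w : 'rV[LT]_r) (rk w + (completion w \notin row_span w) == s))%N.
  rewrite /num_perp_rank big_row_cons; apply: eq_bigr => w _.
  under eq_bigr do rewrite dot_row_cons eq0_completion rk_row_cons.
  by rewrite (bigD1 (completion w)) //= eqxx big1 ?addn0 // => x /negbTE ->.
rewrite /num_completable /num_rank; case: s => [|s]; rewrite !natr_sum.
  by rewrite addr0; apply: eq_bigr => w _; case: (_ \in _); rewrite ?addn0 ?addn1.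
rewrite -sumrB -big_split /=; apply: eq_bigr => w _.
by case: (_ \in _); rewrite /= ?addn0 ?addn1 ?eqSS ?subrr ?addr0 ?subr0 ?add0r.
Qed.

Lemma sum_num_perp_rank_shift t :
  (\sum_(a : 'rV[F]_r) num_perp_rank (shift_row v y a) t = num_completable t * q ^ (r - t))%N.
Proof.
rewrite /num_perp_rank /num_completable exchange_big big_distrl /=.
apply: eq_bigr => w _.
under eq_bigr do rewrite dot_shift_row addrC eq0_completion.
have [rk_w|] := eqP; last by rewrite andbF big1 // => a _; rewrite andbF.
under eq_bigr do rewrite andbT.
by rewrite sum_lincomb_fiber -rkE rk_w andbT.
Qed.

End Completion.

Section Counting.
Variable m : nat.
Hypothesis dimL : \dim {: L}%VS = m.

Lemma card_finvect : #|LT| = (q ^ m)%N.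
Proof. by rewrite -(card_vspacef (Vector.class LT)) card_vspace dimL. Qed.

Lemma sum_rk_row_cons r (w : 'rV[LT]_r) s :
  (\sum_(x : LT) (rk (row_cons x w) == s))%N%:R =
    (rk w == s)%:R * q%:R ^+ rk w + ((rk w).+1 == s)%:R * (q%:R ^+ m - q%:R ^+ rk w)
  :> rat.
Proof.
under eq_bigr do rewrite rk_row_cons.
rewrite sum_addn_notin natrD !natrM -!natrX -card_row_span -card_finvect.
by rewrite -(cardC (row_span w)) natrD addrAC subrr add0r.
Qed.

Lemma num_rank_succ r s :
  (num_rank r.+1 s)%:R = q%:R ^+ s * (num_rank r s)%:R +
    (if s is s'.+1 then (q%:R ^+ m - q%:R ^+ s') * (num_rank r s')%:R else 0) :> rat.
Proof.
rewrite /num_rank big_row_cons natr_sum.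
under eq_bigr do rewrite sum_rk_row_cons.
rewrite big_split /= natr_sum mulr_sumr; congr (_ + _).
  by apply: eq_bigr => w _; case: eqP => [->|]; rewrite ?mulr1 ?mulr0 ?mul1r ?mul0r.
case: s => [|s]; first by rewrite big1 // => w _; rewrite mul0r.
rewrite natr_sum mulr_sumr; apply: eq_bigr => w _.
by rewrite eqSS; case: eqP => [->|]; rewrite ?mulr1 ?mulr0 ?mul1r ?mul0r.
Qed.

Lemma num_rank_plus_pow r s : (num_rank r s)%:R = hc (qpow q (hX_plus q) r) s m%:Z.
Proof.
elim: r s => [|r IH] s.
  rewrite /num_rank /hc /=; under eq_bigr do rewrite rk_row0.
  by rewrite sum_nat_const card_mx mul1n expn0 mul1n; case: s.
by rewrite num_rank_succ hc_plus_pow_succ //; case: s => [|s]; rewrite ?IH.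
Qed.

Lemma num_perp_rank_rwe r (v : 'rV[LT]_r) s :
  rk v = r -> (num_perp_rank v s)%:R = rwe_formula q m r s.
Proof.
elim: r v s => [|r IH] v s rk_v.
  rewrite rwe_formula0 // /num_perp_rank.
  under eq_bigr do rewrite rk_row0 /dot big_ord0 eqxx.
  by rewrite sum_nat_const card_mx mul1n expn0 mul1n eq_sym.
move: rk_v; rewrite -(row_cons_eta v); set y := v ord0 ord0; set v' := row_tail v.
move=> rk_v.
have y_neq0 : y != 0.
  apply: contra_eqN rk_v => /eqP y0.
  by rewrite rk_row_cons y0 mem0v addn0 neq_ltn ltnS rk_le.
(* Each shift of v' has rank r, so the induction hypothesis evaluates every
   summand of sum_num_perp_rank_shift. *)
have completable t : (num_completable v' y t)%:R = q%:R ^+ t * rwe_formula q m r t :> rat.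
  have := sum_num_perp_rank_shift v' y_neq0 t.
  move/(congr1 (fun n => n%:R : rat)); rewrite natr_sum natrM.
  under eq_bigr do rewrite IH ?(rk_shift_row _ rk_v) //.
  rewrite sumr_const card_mx mul1n -[_ *+ _]mulr_natl !natrX => shift_sum.
  have [t_le_r|r_lt_t] := leqP t r; last first.
    rewrite rwe_formula_gt // mulr0 /num_completable big1 // => w _.
    by rewrite (ltn_eqF (leq_ltn_trans (rk_le w) r_lt_t)) andbF.
  apply: (@mulIf _ (q%:R ^+ (r - t))); first by rewrite expf_neq0 // pnatr_eq0 -lt0n.
  by rewrite -shift_sum mulrAC -exprD subnKC.
rewrite num_perp_rank_row_cons // rwe_formula_succ // completable.
by case: s => // s; rewrite completable num_rank_plus_pow.
Qed.

End Counting.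
End RankMetric.

Unset Implicit Arguments.

Theorem lemma7 (F : finFieldType) (L : fieldExtType F) (m : nat) :
  \dim {: L}%VS = m ->
  let q := #|F| in
  (* A_{r,r} depends only on r and satisfies the recursion *)
  (exists A : nat -> int,
     A 0%N = 1 /\
     (forall r : nat, (1 <= r <= m)%N ->
        A r = alpha q m r.-1 - (q ^ r.-1)%:Z * A r.-1) /\
     (forall (r : nat) (v : 'rV[finvect_type L]_r),
        (1 <= r <= m)%N -> rk v = r ->
        (rwe_coef (perp (lspan v)) r)%:Z = A r))
  /\
  (* rank weight enumerator of L_r *)
  (forall (r : nat) (v : 'rV[finvect_type L]_r),
     (1 <= r <= m)%N -> rk v = r ->
     forall u : nat,
       (rwe_coef (perp (lspan v)) u)%:R =
       (q%:Q) ^ (- (m%:Z)) *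
         (hc (qpow q (hX_plus q) r) u m%:Z
          + ((q%:Q) ^ (m%:Z) - 1) * hc (qpow q hX_minus r) u m%:Z)).
Proof.
move=> dimL q.
have q_gt0 : (0 < q)%N := ltnW (card_finNzRing_gt1 F).
have perp_rwe r (v : 'rV[finvect_type L]_r) u : rk v = r ->
    (rwe_coef (perp (lspan v)) u)%:R = rwe_formula q m r u.
  by move=> rk_v; rewrite rwe_coef_perp_lspan (num_perp_rank_rwe dimL).
split; last by move=> r v _ rk_v u; rewrite perp_rwe.
exists (full_rank_perp_count q m); do 2!split => //; first by case.
move=> r v _ rk_v; apply: (@intr_inj rat).
by rewrite -pmulrn perp_rwe // rwe_formula_diag.
Qed.
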